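(* For every path $\pi$, every message $t$ and all $i,k\in\mathbb{N}$ with $i\le k$: if $\pi(k)$ has $t$, then either $\pi(i)$ is a subterm of $\pi(k)$, or there exists $j\in\mathbb{N}$ with $i\le j<k$ and $\pi(j+1)=\mathrm{ex}(t,\pi(j))$.
   Context: Messages form a set $\mathcal{T}$ (terms of a cryptographic message algebra; only their identity matters here). TPM machine states are the terms of sort $\mathsf{M}$ generated by a constant $\mathrm{bt}$ (boot) and a constructor $\mathrm{ex}:\mathcal{T}\times\mathsf{M}\to\mathsf{M}$ (extend); these are free constructors, so distinct terms are distinct states. The TPM transition relation $\leadsto$ on states is defined by: $m_0\leadsto m_1$ iff $m_1=\mathrm{bt}$, or $m_1=\mathrm{ex}(t,m_0)$ for some message $t$, or $m_0=m_1$. A path is an infinite sequence $\pi:\mathbb{N}\to\mathsf{M}$ with $\pi(0)=\mathrm{bt}$ and $\pi(i)\leadsto\pi(i+1)$ for all $i$. A state $m$ has a message $t$ if some state of the form $\mathrm{ex}(t,m')$ is a subterm of $m$ (e.g. $\mathrm{ex}(\text{obtain},\mathrm{ex}(v,\mathrm{bt}))$ has obtain and $v$ but not refuse). For states, $m$ is a subterm of $m'$ means $m'=\mathrm{ex}(t_1,\mathrm{ex}(t_2,\dots\mathrm{ex}(t_r,m)\dots))$ for some $r\ge 0$ and messages $t_1,\dots,t_r$. *)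

(* Messages are an arbitrary type T (only identity matters). *)
From Stdlib Require Import Arith Lia.

Inductive state (T : Type) : Type :=
| bt : state T
| ex : T -> state T -> state T.
Arguments bt {T}.
Arguments ex {T} _ _.

Definition step {T : Type} (m0 m1 : state T) : Prop :=
  m1 = bt \/ (exists t, m1 = ex t m0) \/ m0 = m1.

Definition is_path {T : Type} (pi : nat -> state T) : Prop :=
  pi 0 = bt /\ forall i, step (pi i) (pi (i + 1)).

Inductive subterm {T : Type} : state T -> state T -> Prop :=
| subterm_refl : forall m, subterm m m
| subterm_ex : forall m t m', subterm m m' -> subterm m (ex t m').

Definition has_msg {T : Type} (m : state T) (t : T) : Prop :=
  exists m', subterm (ex t m') m.

(** A reboot step leaves no message and a stuttering step
    changes nothing, so only an extension [ex s (pi k)] can matter: if [s = t]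
    this step is the witness [j = k], otherwise [t] was already in [pi k] and
    the induction hypothesis applies, a subterm of [pi k] being also a
    subterm of [ex s (pi k)]. *)
From Stdlib Require Import Arith Lia.

Lemma has_msg_bt {T : Type} {t : T} : ~ has_msg bt t.
Proof. intros [m' H]; inversion H. Qed.

Lemma has_msg_ex_inv {T : Type} {s t : T} {m : state T} :
  has_msg (ex s m) t -> s = t \/ has_msg m t.
Proof.
  intros [m' H]; inversion H; subst.
  - left; reflexivity.
  - right; exists m'; assumption.
Qed.

Section StepSequence.

Context {T : Type} {pi : nat -> state T} {t : T}.
Hypothesis pi_step : forall n, step (pi n) (pi (n + 1)).

Definition added_between (i k : nat) : Prop :=
  exists j, i <= j /\ j < k /\ pi (j + 1) = ex t (pi j).

Lemma added_between_widen (i k : nat) :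
  added_between i k -> added_between i (S k).
Proof. intros [j (Hij & Hjk & Hj)]; exists j; repeat split; auto; lia. Qed.

Lemma subterm_or_added {i k : nat} :
  i <= k -> has_msg (pi k) t ->
  subterm (pi i) (pi k) \/ added_between i k.
Proof.
  induction 1 as [|k Hik IH]; intros Hmsg.
  - left; constructor.
  - rewrite <- Nat.add_1_r in Hmsg |- *.
    destruct (pi_step k) as [Hbt | [[s Hex] | Hsame]].
    + rewrite Hbt in Hmsg; destruct (has_msg_bt Hmsg).
    + rewrite Hex in Hmsg |- *.
      destruct (has_msg_ex_inv Hmsg) as [Hst | Hold].
      * right; exists k; repeat split; [assumption | lia | rewrite Hex, Hst; reflexivity].
      * destruct (IH Hold) as [Hsub | Hadd].
        -- left; constructor; exact Hsub.
        -- right; rewrite Nat.add_1_r; apply added_between_widen; exact Hadd.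
    + rewrite <- Hsame in Hmsg |- *.
      destruct (IH Hmsg) as [Hsub | Hadd]; [left; exact Hsub |].
      right; rewrite Nat.add_1_r; apply added_between_widen; exact Hadd.
Qed.

End StepSequence.

Theorem lemma1 (T : Type) (pi : nat -> state T) (t : T) (i k : nat) :
  is_path pi -> i <= k -> has_msg (pi k) t ->
  subterm (pi i) (pi k) \/
  (exists j, i <= j /\ j < k /\ pi (j + 1) = ex t (pi j)).
Proof.
  intros [_ Hstep] Hik Hmsg.
  exact (subterm_or_added Hstep Hik Hmsg).
Qed.
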